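(* Let $n\ge 1$ and $d\ge 1$ be integers, let $\mathcal{X}\subset\mathbb{R}^d$ be compact and convex, let $\mathbf{x}_0\in\mathcal{X}$, let $w_0,w_1,\dots,w_n\in\mathbb{R}$, and let $\mathbf{t}_1,\dots,\mathbf{t}_n\in\mathbb{R}^d$. Consider the $n$-player game $G$ in which player $i\in[n]$ chooses $\mathbf{x}_i\in\mathcal{X}$ and incurs the loss $\ell_i(\mathbf{x}_1,\dots,\mathbf{x}_n)=\|w_0\mathbf{x}_0+\sum_{j=1}^n w_j\mathbf{x}_j-\mathbf{t}_i\|_2^2$. Let $\phi(\mathbf{x}_1,\dots,\mathbf{x}_n)=\|\sum_{i=0}^n w_i\mathbf{x}_i\|_2^2-2\sum_{i=1}^n w_i\mathbf{t}_i^\top\mathbf{x}_i$. Then the set of pure Nash equilibria of $G$ equals $\operatorname{argmin}_{\mathbf{x}\in\mathcal{X}^n}\phi(\mathbf{x})$.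
   Context: A pure Nash equilibrium of $G$ is a profile $\mathbf{x}=(\mathbf{x}_1,\dots,\mathbf{x}_n)\in\mathcal{X}^n$ such that $\ell_i(\mathbf{x}_i,\mathbf{x}_{-i})\le\ell_i(\mathbf{y},\mathbf{x}_{-i})$ for all $\mathbf{y}\in\mathcal{X}$ and all $i\in[n]$, where $(\mathbf{y},\mathbf{x}_{-i})$ denotes the profile with player $i$'s action replaced by $\mathbf{y}$. *)

From HB Require Import structures.
From mathcomp Require Import all_boot all_order all_algebra.
From mathcomp Require Import all_classical all_reals all_analysis.
Set Implicit Arguments. Unset Strict Implicit. Unset Printing Implicit Defensive.
Import Order.TTheory GRing.Theory Num.Theory.
Import numFieldNormedType.Exports.
Local Open Scope classical_set_scope.
Local Open Scope ring_scope.

Definition sqnorm (R : realType) (d : nat) (v : 'rV[R]_d) : R :=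
  \sum_(k < d) (v ord0 k) ^+ 2.

Definition dotv (R : realType) (d : nat) (u v : 'rV[R]_d) : R :=
  \sum_(k < d) u ord0 k * v ord0 k.

Definition loss (R : realType) (d n : nat) (w0 : R) (x0 : 'rV[R]_d)
  (w : 'I_n -> R) (t : 'I_n -> 'rV[R]_d) (i : 'I_n)
  (x : 'I_n -> 'rV[R]_d) : R :=
  sqnorm (w0 *: x0 + \sum_(j < n) w j *: x j - t i).

Definition potential (R : realType) (d n : nat) (w0 : R) (x0 : 'rV[R]_d)
  (w : 'I_n -> R) (t : 'I_n -> 'rV[R]_d) (x : 'I_n -> 'rV[R]_d) : R :=
  sqnorm (w0 *: x0 + \sum_(j < n) w j *: x j)
  - 2 * \sum_(i < n) w i * dotv (t i) (x i).

Definition upd (R : realType) (d n : nat) (x : 'I_n -> 'rV[R]_d) (i : 'I_n)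
  (y : 'rV[R]_d) : 'I_n -> 'rV[R]_d :=
  fun j => if j == i then y else x j.

Definition profile_in (R : realType) (d n : nat) (X : set 'rV[R]_d)
  (x : 'I_n -> 'rV[R]_d) : Prop := forall i, X (x i).

Definition pure_nash (R : realType) (d n : nat) (X : set 'rV[R]_d)
  (l : 'I_n -> ('I_n -> 'rV[R]_d) -> R) (x : 'I_n -> 'rV[R]_d) : Prop :=
  profile_in X x /\
  forall (i : 'I_n) (y : 'rV[R]_d), X y -> l i x <= l i (upd x i y).

Definition is_argmin (R : realType) (d n : nat) (X : set 'rV[R]_d)
  (f : ('I_n -> 'rV[R]_d) -> R) (x : 'I_n -> 'rV[R]_d) : Prop :=
  profile_in X x /\ forall z, profile_in X z -> f x <= f z.

(* G is an exact potential game: when player i alone deviates from x_i to y,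
   the loss l_i and the potential phi change by the same amount, so every
   minimiser of phi over X^n is a pure Nash equilibrium.  Conversely,
   expanding the square gives
     phi(z) - phi(x) = sum_i Dl_i(x)(z_i - x_i) + ||sum_j w_j (z_j - x_j)||^2,
   where Dl_i(x)(v) = 2 <S(x) - t_i, w_i v> ([dloss x i v]) is the derivative
   of l_i in the direction v of player i's action and
   S(x) = w_0 x_0 + sum_j w_j x_j ([aggregate x]).  At a Nash equilibrium over
   the convex set X, deviating to x_i + s (z_i - x_i) for small s > 0 forces
   Dl_i(x)(z_i - x_i) >= 0, hence phi(z) >= phi(x). *)
From HB Require Import structures.
From mathcomp Require Import all_boot all_order all_algebra.
From mathcomp Require Import all_classical all_reals all_analysis.
From mathcomp Require Import ring lra.
Import Order.TTheory GRing.Theory Num.Theory.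
Import numFieldNormedType.Exports.
Local Open Scope classical_set_scope.
Local Open Scope ring_scope.
Set Implicit Arguments. Unset Strict Implicit. Unset Printing Implicit Defensive.

Section InnerProduct.
Variables (R : realType) (d : nat).
Implicit Types u v : 'rV[R]_d.

Lemma dotvC u v : dotv u v = dotv v u.
Proof. by apply: eq_bigr => k _; rewrite mulrC. Qed.

Lemma dotvDl u1 u2 v : dotv (u1 + u2) v = dotv u1 v + dotv u2 v.
Proof. by rewrite /dotv -big_split; apply: eq_bigr => k _; rewrite mxE mulrDl. Qed.

Lemma dotvZl a u v : dotv (a *: u) v = a * dotv u v.
Proof. by rewrite /dotv mulr_sumr; apply: eq_bigr => k _; rewrite mxE mulrA. Qed.

Lemma dotvBl u1 u2 v : dotv (u1 - u2) v = dotv u1 v - dotv u2 v.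
Proof. by rewrite dotvDl -scaleN1r dotvZl mulN1r. Qed.

Lemma dotvDr u v1 v2 : dotv u (v1 + v2) = dotv u v1 + dotv u v2.
Proof. by rewrite !(dotvC u) dotvDl. Qed.

Lemma dotvZr a u v : dotv u (a *: v) = a * dotv u v.
Proof. by rewrite !(dotvC u) dotvZl. Qed.

Lemma dotvBr u v1 v2 : dotv u (v1 - v2) = dotv u v1 - dotv u v2.
Proof. by rewrite !(dotvC u) dotvBl. Qed.

Lemma dotv0r u : dotv u 0 = 0.
Proof. by rewrite -(scale0r (0 : 'rV[R]_d)) dotvZr mul0r. Qed.

Lemma dotv_sumr (I : Type) (r : seq I) (P : pred I) (F : I -> 'rV[R]_d) u :
  dotv u (\sum_(j <- r | P j) F j) = \sum_(j <- r | P j) dotv u (F j).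
Proof. exact: (big_morph _ (dotvDr u) (dotv0r u)). Qed.

Lemma sqnormE v : sqnorm v = dotv v v.
Proof. by apply: eq_bigr => k _; rewrite expr2. Qed.

Lemma sqnorm_ge0 v : 0 <= sqnorm v.
Proof. by apply: sumr_ge0 => k _; rewrite sqr_ge0. Qed.

Lemma sqnormD u v : sqnorm (u + v) = sqnorm u + 2 * dotv u v + sqnorm v.
Proof. by rewrite !sqnormE dotvDl !dotvDr (dotvC v u); ring. Qed.

Lemma sqnormZ a v : sqnorm (a *: v) = a ^+ 2 * sqnorm v.
Proof. by rewrite !sqnormE dotvZl dotvZr mulrA expr2. Qed.

End InnerProduct.

Lemma linear_coef_ge0 (R : realFieldType) (g c : R) :
  (forall s : R, 0 < s -> s <= 1 -> 0 <= s * g + s ^+ 2 * c) -> 0 <= g.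
Proof.
move=> step; rewrite leNgt; apply/negP => g_lt0.
have c_le : c <= `|c| := ler_norm c.
have den_gt0 : 0 < `|c| - g by have := normr_ge0 c; lra.
pose s := - g / (`|c| - g).
have s_gt0 : 0 < s by rewrite divr_gt0 // oppr_gt0.
have s_le1 : s <= 1 by rewrite ler_pdivrMr // mul1r; have := normr_ge0 c; lra.
have sE : s * (`|c| - g) = - g by rewrite mulrVK ?unitfE ?gt_eqF.
have := step s s_gt0 s_le1; rewrite expr2 -mulrA -mulrDr pmulr_rge0 //.
nra.
Qed.

Lemma convex_set_segment (R : numDomainType) (M : lmodType R)
    (A : set (convex_lmodType M)) (u v : M) (s : R) :
  convex_set A -> A u -> A v -> 0 <= s -> s <= 1 -> A (v + s *: (u - v)).
Proof.
move=> convA Au Av s_ge0 s_le1.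
have := convA u v (Itv01 s_ge0 s_le1); rewrite !inE => /(_ Au Av).
congr A; rewrite /conv /= [unstable.onem s]/(1 - s).
by rewrite scalerBl scale1r scalerBr addrCA addrC.
Qed.

Lemma sum_updB (R : realType) (V : zmodType) (d n : nat)
    (F : 'I_n -> 'rV[R]_d -> V) (x : 'I_n -> 'rV[R]_d) (i : 'I_n) y :
  (forall j, F j 0 = 0) ->
  \sum_(j < n) F j (upd x i y j - x j) = F i (y - x i).
Proof.
move=> F0; rewrite (bigD1 i) //= big1 ?addr0 => [|j /negbTE ji].
  by rewrite /upd eqxx.
by rewrite /upd ji subrr F0.
Qed.

Section PotentialGame.
Variables (R : realType) (d n : nat) (w0 : R) (x0 : 'rV[R]_d)
  (w : 'I_n -> R) (t : 'I_n -> 'rV[R]_d).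
Implicit Types (x z : 'I_n -> 'rV[R]_d) (y v : 'rV[R]_d).

Local Notation loss := (loss w0 x0 w t).
Local Notation potential := (potential w0 x0 w t).

Definition aggregate x := w0 *: x0 + \sum_(j < n) w j *: x j.

Definition dloss x i v := 2 * dotv (aggregate x - t i) (w i *: v).

Lemma aggregateB x z :
  aggregate z = aggregate x + \sum_(j < n) w j *: (z j - x j).
Proof.
rewrite /aggregate -addrA; congr (_ + _).
by rewrite -big_split; apply: eq_bigr => j _ /=; rewrite scalerBr addrCA subrr addr0.
Qed.

Lemma dlossZ x i s v : dloss x i (s *: v) = s * dloss x i v.
Proof. by rewrite /dloss scalerA [w i * s]mulrC -scalerA dotvZr mulrCA. Qed.

Lemma lossB_upd x i y :
  loss i (upd x i y) - loss i x = dloss x i (y - x i) + sqnorm (w i *: (y - x i)).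
Proof.
rewrite /loss -/(aggregate x) -/(aggregate (upd x i y)) (aggregateB x).
rewrite (@sum_updB _ _ _ _ (fun j v => w j *: v)) => [|j]; last exact: scaler0.
by rewrite addrAC sqnormD /dloss; ring.
Qed.

Lemma potentialB x z :
  potential z - potential x =
  \sum_(j < n) dloss x j (z j - x j) + sqnorm (\sum_(j < n) w j *: (z j - x j)).
Proof.
have linear_part : \sum_(j < n) dloss x j (z j - x j) =
    2 * dotv (aggregate x) (\sum_(j < n) w j *: (z j - x j))
    - 2 * (\sum_(j < n) w j * dotv (t j) (z j) - \sum_(j < n) w j * dotv (t j) (x j)).
  rewrite dotv_sumr -sumrB !mulr_sumr -sumrB; apply: eq_bigr => j _.
  by rewrite /dloss dotvBl !dotvZr !dotvBr; ring.
rewrite /potential -/(aggregate z) -/(aggregate x) (aggregateB x z) sqnormD.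
by rewrite linear_part; ring.
Qed.

Lemma potentialB_upd x i y :
  potential (upd x i y) - potential x = loss i (upd x i y) - loss i x.
Proof.
rewrite potentialB lossB_upd (@sum_updB _ _ _ _ (dloss x)); last first.
  by move=> j; rewrite /dloss scaler0 dotv0r mulr0.
by rewrite (@sum_updB _ _ _ _ (fun j v => w j *: v)) // => j; exact: scaler0.
Qed.

Lemma argmin_is_nash (X : set 'rV[R]_d) x :
  is_argmin X potential x -> pure_nash X loss x.
Proof.
move=> [Xx argmin]; split=> // i y Xy.
rewrite -subr_ge0 -potentialB_upd subr_ge0; apply: argmin => j.
by rewrite /upd; case: eqP.
Qed.

Variable X : set 'rV[R]_d.
Hypothesis convX : convex_set (X : set (convex_lmodType 'rV[R]_d)).

Lemma nash_dloss_ge0 x i y :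
  pure_nash X loss x -> X y -> 0 <= dloss x i (y - x i).
Proof.
move=> [Xx nash] Xy; apply: (linear_coef_ge0 (c := sqnorm (w i *: (y - x i)))).
move=> s s_gt0 s_le1.
have Xs := convex_set_segment convX Xy (Xx i) (ltW s_gt0) s_le1.
have := nash i _ Xs; rewrite -subr_ge0 lossB_upd addrAC subrr add0r.
by rewrite dlossZ scalerA [w i * s]mulrC -scalerA sqnormZ.
Qed.

Lemma nash_is_argmin x : pure_nash X loss x -> is_argmin X potential x.
Proof.
move=> nash; split=> [|z Xz]; first by case: nash.
rewrite -subr_ge0 potentialB addr_ge0 ?sqnorm_ge0 //.
by apply: sumr_ge0 => j _; exact: nash_dloss_ge0.
Qed.

End PotentialGame.

Theorem proposition1 (R : realType) (n d : nat) (hn : (1 <= n)%N) (hd : (1 <= d)%N)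
  (X : set 'rV[R]_d) (hXc : compact X)
  (hXv : convex_set (X : set (convex_lmodType 'rV[R]_d)))
  (x0 : 'rV[R]_d) (hx0 : X x0) (w0 : R) (w : 'I_n -> R)
  (t : 'I_n -> 'rV[R]_d) :
  [set x | pure_nash X (loss w0 x0 w t) x] =
  [set x | is_argmin X (potential w0 x0 w t) x].
Proof.
apply/seteqP; split=> x /=.
- exact: nash_is_argmin.
- exact: argmin_is_nash.
Qed.
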